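(* Let $A$ be an Archimedean semiprime $f$-algebra which is relatively uniformly complete. Then every intermediate algebra in $A$ (i.e., every subalgebra of $A$ containing $A_b$) is an order ideal of $A$.
   Context: An $f$-algebra is a real associative algebra that is a vector lattice with $A_+A_+\subseteq A_+$ and such that $a\wedge b=0$ implies $ac\wedge b=ca\wedge b=0$ for all $c\in A_+$; it is semiprime if $0$ is its only nilpotent element. $A_b=\{a\in A: a^2\le\mu|a|\text{ for some }\mu\in(0,\infty)\}$ is the set of bounded elements. An order ideal is a solid vector subspace. *)

From HB Require Import structures.
From mathcomp Require Import all_boot all_order all_algebra.
From mathcomp Require Import reals.
Set Implicit Arguments. Unset Strict Implicit. Unset Printing Implicit Defensive.
Import Order.TTheory GRing.Theory Num.Theory.
Local Open Scope ring_scope.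

Section FAlg.
Variables (R : realType) (A : lmodType R).
(* A (possibly non-unital) multiplication, an order relation, and the
   lattice operations of A, given explicitly. *)
Variables (mul : A -> A -> A) (le : A -> A -> Prop) (meet join : A -> A -> A).

Definition is_real_algebra : Prop :=
  (forall a b c, mul a (mul b c) = mul (mul a b) c) /\
  (forall a b c, mul (a + b) c = mul a c + mul b c) /\
  (forall a b c, mul a (b + c) = mul a b + mul a c) /\
  (forall (r : R) a b, mul (r *: a) b = r *: mul a b) /\
  (forall (r : R) a b, mul a (r *: b) = r *: mul a b).

Definition is_vector_lattice : Prop :=
  (forall x, le x x) /\
  (forall x y, le x y -> le y x -> x = y) /\
  (forall x y z, le x y -> le y z -> le x z) /\
  (forall x y z, le x y -> le (x + z) (y + z)) /\
  (forall (r : R) x, 0 <= r -> le 0 x -> le 0 (r *: x)) /\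
  (forall x y, le (meet x y) x /\ le (meet x y) y /\
     forall z, le z x -> le z y -> le z (meet x y)) /\
  (forall x y, le x (join x y) /\ le y (join x y) /\
     forall z, le x z -> le y z -> le (join x y) z).

Definition absv (x : A) : A := join x (- x).

Definition is_f_algebra : Prop :=
  is_real_algebra /\ is_vector_lattice /\
  (forall a b, le 0 a -> le 0 b -> le 0 (mul a b)) /\
  (forall a b c, meet a b = 0 -> le 0 c ->
     meet (mul a c) b = 0 /\ meet (mul c a) b = 0).

(* npow a n = a^(n+1) *)
Definition npow (a : A) (n : nat) : A := iter n (mul a) a.

Definition nilpotent_elt (a : A) : Prop := exists n, npow a n = 0.

Definition semiprime : Prop := forall a, nilpotent_elt a -> a = 0.

Definition archimedean_vl : Prop :=
  forall x y, le 0 x -> (forall n : nat, le (x *+ n) y) -> x = 0.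

Definition ru_converges (f : nat -> A) (g : A) : Prop :=
  exists u, le 0 u /\ forall eps : R, 0 < eps ->
    exists N, forall n, (N <= n)%N -> le (absv (f n - g)) (eps *: u).

Definition ru_cauchy (f : nat -> A) : Prop :=
  exists u, le 0 u /\ forall eps : R, 0 < eps ->
    exists N, forall n m, (N <= n)%N -> (N <= m)%N ->
      le (absv (f n - f m)) (eps *: u).

Definition ru_complete : Prop :=
  forall f, ru_cauchy f -> exists g, ru_converges f g.

Definition bounded_elt (a : A) : Prop :=
  exists mu : R, 0 < mu /\ le (mul a a) (mu *: absv a).

Definition subalgebra (B : A -> Prop) : Prop :=
  B 0 /\ (forall a b, B a -> B b -> B (a + b)) /\
  (forall (r : R) a, B a -> B (r *: a)) /\
  (forall a b, B a -> B b -> B (mul a b)).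

Definition intermediate_algebra (B : A -> Prop) : Prop :=
  subalgebra B /\ (forall a, bounded_elt a -> B a).

Definition order_ideal (B : A -> Prop) : Prop :=
  B 0 /\ (forall a b, B a -> B b -> B (a + b)) /\
  (forall (r : R) a, B a -> B (r *: a)) /\
  (forall a b, B b -> le (absv a) (absv b) -> B a).

End FAlg.

From mathcomp Require Import all_boot all_order all_algebra.
From mathcomp Require Import reals.
Set Implicit Arguments. Unset Strict Implicit. Unset Printing Implicit Defensive.
Import Order.TTheory GRing.Theory Num.Theory.
Local Open Scope ring_scope.

(* Let 0 ≤ g ≤ b⁺ with b ∈ B. Relative uniform completeness lets one solve
   y + |b| y = g with 0 ≤ y ≤ g, by a bisection in the lattice whose lower
   endpoints form an r.u. Cauchy sequence. Since y ≤ b⁺ is disjoint from b⁻,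
   |b| y = b y, so g = y + b y; and y + |b| y ≤ |b| together with
   semiprimeness forces y² ≤ y, so y ∈ A_b ⊆ B and hence g ∈ B. Riesz
   decomposition (g = g ⊓ b⁺ + (g - g ⊓ b⁺) with the second summand below
   b⁻ = (-b)⁺) extends this to 0 ≤ g ≤ |b|, and a = a⁺ - a⁻ gives
   solidity. *)

Lemma exists_halfpow_le (R : archiRealFieldType) (eps : R) :
  0 < eps -> exists N : nat, 2^-1 ^+ N <= eps.
Proof.
move=> eps_gt0; have /archi_boundP : 0 <= eps^-1 by rewrite invr_ge0 ltW.
set N := Num.Def.archi_bound _ => epsVN; exists N.
have N_le_2N : (N%:R : R) <= 2 ^+ N.
  by rewrite -natrX ler_nat ltnW // ltn_expl.
rewrite exprVn -[eps]invrK lef_pV2 ?posrE ?invr_gt0 ?exprn_gt0 //.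
exact: ltW (lt_le_trans epsVN N_le_2N).
Qed.

Section FAlgebraTheory.
Variables (R : realType) (A : lmodType R).
Variables (mul : A -> A -> A) (le : A -> A -> Prop) (meet join : A -> A -> A).

Local Notation "x ⊑ y" := (le x y) (at level 70, no associativity).
Local Notation "x ⊓ y" := (meet x y) (at level 50, left associativity).
Local Notation "x ⊔ y" := (join x y) (at level 50, left associativity).
Local Notation "a ⋅ b" := (mul a b) (at level 40, left associativity).

Hypothesis vle_refl : forall x, x ⊑ x.
Hypothesis vle_anti : forall x y, x ⊑ y -> y ⊑ x -> x = y.
Hypothesis vle_trans : forall x y z, x ⊑ y -> y ⊑ z -> x ⊑ z.
Hypothesis vleD2r : forall x y z, x ⊑ y -> x + z ⊑ y + z.
Hypothesis vscale_ge0 : forall (r : R) x, 0 <= r -> 0 ⊑ x -> 0 ⊑ r *: x.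
Hypothesis vmeet_spec : forall x y,
  (x ⊓ y) ⊑ x /\ (x ⊓ y) ⊑ y /\ forall z, z ⊑ x -> z ⊑ y -> z ⊑ (x ⊓ y).
Hypothesis vjoin_spec : forall x y,
  x ⊑ (x ⊔ y) /\ y ⊑ (x ⊔ y) /\ forall z, x ⊑ z -> y ⊑ z -> (x ⊔ y) ⊑ z.

Lemma vsubr_ge0 x y : 0 ⊑ y - x <-> x ⊑ y.
Proof.
split=> [|xy]; last by have := vleD2r (- x) xy; rewrite subrr.
by move/(vleD2r x); rewrite add0r subrK.
Qed.

Lemma vleD2l x u v : x + u ⊑ x + v <-> u ⊑ v.
Proof.
split; last by move/(vleD2r x); rewrite ![_ + x]addrC.
by move/(vleD2r (- x)); rewrite ![x + _]addrC !addrK.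
Qed.

Lemma vleD x y u v : x ⊑ y -> u ⊑ v -> x + u ⊑ y + v.
Proof. by move=> /(vleD2r u) xuyu /(vleD2l y); apply: vle_trans. Qed.

Lemma vaddr_ge0 x y : 0 ⊑ x -> 0 ⊑ y -> 0 ⊑ x + y.
Proof. by move=> x0 y0; have := vleD x0 y0; rewrite addr0. Qed.

Lemma vlerBlDr x y z : x - y ⊑ z <-> x ⊑ z + y.
Proof.
split; first by move/(vleD2r y); rewrite subrK.
by move/(vleD2r (- y)); rewrite addrK.
Qed.

Lemma vlerBrDr x y z : x ⊑ y - z <-> x + z ⊑ y.
Proof.
split; first by move/(vleD2r z); rewrite subrK.
by move/(vleD2r (- z)); rewrite addrK.
Qed.

Lemma vsubr_le0 x y : x - y ⊑ 0 <-> x ⊑ y.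
Proof. by rewrite vlerBlDr add0r. Qed.

Lemma vleN2 x y : - y ⊑ - x <-> x ⊑ y.
Proof. by rewrite -vsubr_ge0 opprK addrC vsubr_ge0. Qed.

Lemma vlerDl x y : 0 ⊑ y -> x ⊑ x + y.
Proof. by rewrite -{1}[x]addr0 vleD2l. Qed.

Lemma vgerBl x y : 0 ⊑ y -> x - y ⊑ x.
Proof. by move=> y0; apply/vlerBlDr/vlerDl. Qed.

Lemma vler_wpZ2l (r : R) x y : 0 <= r -> x ⊑ y -> r *: x ⊑ r *: y.
Proof.
by move=> r0 /vsubr_ge0 xy; apply/vsubr_ge0; rewrite -scalerBr; apply: vscale_ge0.
Qed.

Lemma vler_wpZ2r (r1 r2 : R) x : r1 <= r2 -> 0 ⊑ x -> r1 *: x ⊑ r2 *: x.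
Proof.
by move=> r12 x0; apply/vsubr_ge0; rewrite -scalerBl; apply: vscale_ge0; rewrite ?subr_ge0.
Qed.

Lemma vleIl x y : (x ⊓ y) ⊑ x. Proof. by case: (vmeet_spec x y). Qed.
Lemma vleIr x y : (x ⊓ y) ⊑ y. Proof. by case: (vmeet_spec x y) => _ []. Qed.
Lemma vlexI x y z : z ⊑ x -> z ⊑ y -> z ⊑ (x ⊓ y).
Proof. by case: (vmeet_spec x y) => _ [_]; apply. Qed.
Lemma vleUl x y : x ⊑ (x ⊔ y). Proof. by case: (vjoin_spec x y). Qed.
Lemma vleUr x y : y ⊑ (x ⊔ y). Proof. by case: (vjoin_spec x y) => _ []. Qed.
Lemma vleUx x y z : x ⊑ z -> y ⊑ z -> (x ⊔ y) ⊑ z.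
Proof. by case: (vjoin_spec x y) => _ [_]; apply. Qed.

Lemma vmeetC x y : x ⊓ y = y ⊓ x.
Proof. by apply: vle_anti; apply: vlexI; [exact: vleIr | exact: vleIl | exact: vleIr | exact: vleIl]. Qed.

Lemma vjoinC x y : x ⊔ y = y ⊔ x.
Proof. by apply: vle_anti; apply: vleUx; [exact: vleUr | exact: vleUl | exact: vleUr | exact: vleUl]. Qed.

Lemma vmeetxx x : x ⊓ x = x.
Proof. by apply: vle_anti; [exact: vleIl | apply: vlexI]. Qed.

Lemma vjoinDl x y z : (x ⊔ y) + z = (x + z) ⊔ (y + z).
Proof.
apply: vle_anti; last by apply: vleUx; apply: vleD2r; [exact: vleUl | exact: vleUr].
by apply/vlerBrDr/vleUx; apply/vlerBrDr; [exact: vleUl | exact: vleUr].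
Qed.

Lemma vmeetDl x y z : (x ⊓ y) + z = (x + z) ⊓ (y + z).
Proof.
apply: vle_anti; first by apply: vlexI; apply: vleD2r; [exact: vleIl | exact: vleIr].
by apply/vlerBlDr/vlexI; apply/vlerBlDr; [exact: vleIl | exact: vleIr].
Qed.

Lemma voppU x y : - (x ⊔ y) = (- x) ⊓ (- y).
Proof.
apply: vle_anti; first by apply: vlexI; apply/vleN2; [exact: vleUl | exact: vleUr].
apply/vleN2; rewrite opprK; apply: vleUx; apply/vleN2; rewrite opprK;
  [exact: vleIl | exact: vleIr].
Qed.

Lemma voppI x y : - (x ⊓ y) = (- x) ⊔ (- y).
Proof. by rewrite -[x]opprK -[y]opprK -voppU !opprK. Qed.

Lemma vaddUI x y : x + y = (x ⊔ y) + (x ⊓ y).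
Proof.
apply/eqP; rewrite -subr_eq voppI addrC vjoinDl addrA addNr add0r.
by rewrite addrCA addNr addr0 vjoinC.
Qed.

Definition pospart x := x ⊔ 0.
Definition negpart x := pospart (- x).

Lemma pospart_ge0 x : 0 ⊑ pospart x. Proof. exact: vleUr. Qed.
Lemma negpart_ge0 x : 0 ⊑ negpart x. Proof. exact: vleUr. Qed.
Lemma le_pospart x : x ⊑ pospart x. Proof. exact: vleUl. Qed.
Lemma oppr_le_negpart x : - x ⊑ negpart x. Proof. exact: vleUl. Qed.

Lemma pospartBnegpart x : pospart x - negpart x = x.
Proof. by rewrite /negpart /pospart -oppr0 -voppI opprK oppr0 -vaddUI addr0. Qed.

Lemma negpartE x : negpart x = pospart x - x.
Proof. by rewrite -{3}(pospartBnegpart x) opprB addrC subrK. Qed.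

Lemma meet_pospart_negpart x : pospart x ⊓ negpart x = 0.
Proof.
rewrite negpartE addrC -{1}[pospart x]add0r -vmeetDl -[0 ⊓ _]opprK voppI.
by rewrite !opprK oppr0 -/(pospart x) vjoinC addNr.
Qed.

Lemma subr_meet x y : x - (x ⊓ y) = pospart (x - y).
Proof. by rewrite voppI addrC vjoinDl addNr vjoinC [- y + x]addrC. Qed.

Lemma vmeet_eq0_add u v : u ⊓ v = 0 -> u + v = u ⊔ v.
Proof. by move=> uv0; rewrite vaddUI uv0 addr0. Qed.

Lemma vmeet_eq0_le u u' v v' : 0 ⊑ u -> u ⊑ u' -> 0 ⊑ v -> v ⊑ v' ->
  u' ⊓ v' = 0 -> u ⊓ v = 0.
Proof.
move=> u0 uu' v0 vv' uv'0; apply: vle_anti; last exact: vlexI.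
rewrite -uv'0; apply: vlexI; first exact: vle_trans (vleIl u v) uu'.
exact: vle_trans (vleIr u v) vv'.
Qed.

Lemma vle_absv x : x ⊑ absv join x. Proof. exact: vleUl. Qed.
Lemma voppr_le_absv x : - x ⊑ absv join x. Proof. exact: vleUr. Qed.

Lemma absv_ge0 x : 0 ⊑ absv join x.
Proof.
have two_absv_ge0 : 0 ⊑ absv join x + absv join x.
  by have := vleD (vle_absv x) (voppr_le_absv x); rewrite subrr.
have half_ge0 : (0 : R) <= 2^-1 by rewrite invr_ge0 ler0n.
have := vscale_ge0 half_ge0 two_absv_ge0.
by rewrite -mulr2n -scaler_nat scalerA mulVf ?pnatr_eq0 // scale1r.
Qed.

Lemma absv_id x : 0 ⊑ x -> absv join x = x.
Proof.
move=> x0; apply: vle_anti; last exact: vle_absv.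
by apply: vleUx => //; apply: vle_trans (x0); rewrite -oppr0; apply/vleN2.
Qed.

Lemma pospart_le_absv x : pospart x ⊑ absv join x.
Proof. by apply: vleUx; [exact: vle_absv | exact: absv_ge0]. Qed.

Lemma negpart_le_absv x : negpart x ⊑ absv join x.
Proof. by apply: vleUx; [exact: voppr_le_absv | exact: absv_ge0]. Qed.

Lemma absv_le_pospartDnegpart x : absv join x ⊑ pospart x + negpart x.
Proof.
apply: vleUx.
  by apply: vle_trans (le_pospart x) _; apply: vlerDl; exact: negpart_ge0.
by apply: vle_trans (oppr_le_negpart x) _; rewrite addrC; apply: vlerDl; exact: pospart_ge0.
Qed.

Lemma meet_le_subr g p q : 0 ⊑ q -> g ⊑ p + q -> g - (g ⊓ p) ⊑ q.
Proof. by move=> q0 gpq; rewrite subr_meet; apply: vleUx => //; apply/vlerBlDr; rewrite addrC. Qed.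

Hypothesis varch : archimedean_vl le.

Lemma vle0_of_le_scale z u : 0 ⊑ u -> (forall eps : R, 0 < eps -> z ⊑ eps *: u) -> z ⊑ 0.
Proof.
move=> u0 z_small; suff <- : pospart z = 0 by exact: le_pospart.
apply: (@varch _ u (pospart_ge0 z)) => -[|n]; first by rewrite mulr0n.
have n1_gt0 : (0 : R) < n.+1%:R by rewrite ltr0n.
have : pospart z ⊑ n.+1%:R^-1 *: u.
  by apply: vleUx; [apply: z_small | apply: vscale_ge0]; rewrite ?invr_ge0 ?invr_gt0 ?ltW.
move/(vler_wpZ2l (ltW n1_gt0)).
by rewrite scalerA mulfV ?scale1r ?pnatr_eq0 // scaler_nat.
Qed.

Lemma vle0_of_le_halfpow z u : 0 ⊑ u -> (forall n, z ⊑ 2^-1 ^+ n *: u) -> z ⊑ 0.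
Proof.
move=> u0 z_small; apply: (vle0_of_le_scale u0) => eps /exists_halfpow_le [N halfN_le].
by apply: vle_trans (z_small N) _; apply: vler_wpZ2r.
Qed.

Lemma ru_converges_le f y z N : ru_converges le join f y ->
  (forall n, (N <= n)%N -> f n ⊑ z) -> y ⊑ z.
Proof.
move=> [u [u0 f_cvg]] fz; apply/vsubr_le0.
apply: (vle0_of_le_scale u0) => eps /f_cvg [M fM].
have fNM_le := fM _ (leq_maxr N M).
rewrite -(subrK (f (maxn N M)) y) -addrA -[eps *: u]addr0.
apply: vleD; first by apply: vle_trans fNM_le; rewrite -opprB; exact: voppr_le_absv.
by apply/vlerBlDr; rewrite add0r; apply: fz; exact: leq_maxl.
Qed.

Lemma ru_converges_ge f y z N : ru_converges le join f y ->
  (forall n, (N <= n)%N -> z ⊑ f n) -> z ⊑ y.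
Proof.
move=> [u [u0 f_cvg]] zf; apply/vsubr_ge0/vleN2; rewrite oppr0 opprB.
apply: (vle0_of_le_scale u0) => eps /f_cvg [M fM].
have fNM_le := fM _ (leq_maxr N M).
rewrite -(subrK (f (maxn N M)) z) -addrA addrC -[eps *: u]addr0.
apply: vleD; first exact: vle_trans (vle_absv _) fNM_le.
by apply/vlerBlDr; rewrite add0r; apply: zf; exact: leq_maxl.
Qed.

Hypothesis vmulA : forall a b c, a ⋅ (b ⋅ c) = (a ⋅ b) ⋅ c.
Hypothesis vmulDl : forall a b c, (a + b) ⋅ c = a ⋅ c + b ⋅ c.
Hypothesis vmulDr : forall a b c, a ⋅ (b + c) = a ⋅ b + a ⋅ c.
Hypothesis vmulrZ : forall (r : R) a b, a ⋅ (r *: b) = r *: (a ⋅ b).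
Hypothesis vmul_ge0 : forall a b, 0 ⊑ a -> 0 ⊑ b -> 0 ⊑ a ⋅ b.
Hypothesis vmul_meet_spec : forall a b c, a ⊓ b = 0 -> 0 ⊑ c ->
  (a ⋅ c) ⊓ b = 0 /\ (c ⋅ a) ⊓ b = 0.

Lemma vmulr0 c : c ⋅ 0 = 0.
Proof. by apply: (addrI (c ⋅ 0)); rewrite -vmulDr !addr0. Qed.

Lemma vmul0r c : 0 ⋅ c = 0.
Proof. by apply: (addrI (0 ⋅ c)); rewrite -vmulDl !addr0. Qed.

Lemma vmulrN c x : c ⋅ (- x) = - (c ⋅ x).
Proof. by apply/eqP; rewrite -subr_eq0 opprK -vmulDr addNr vmulr0. Qed.

Lemma vmulNr c x : (- x) ⋅ c = - (x ⋅ c).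
Proof. by apply/eqP; rewrite -subr_eq0 opprK -vmulDl addNr vmul0r. Qed.

Lemma vmulrBr c x y : c ⋅ (x - y) = c ⋅ x - c ⋅ y.
Proof. by rewrite vmulDr vmulrN. Qed.

Lemma vmulrBl c x y : (x - y) ⋅ c = x ⋅ c - y ⋅ c.
Proof. by rewrite vmulDl vmulNr. Qed.

Lemma vler_wpM2l c x y : 0 ⊑ c -> x ⊑ y -> c ⋅ x ⊑ c ⋅ y.
Proof. by move=> c0 /vsubr_ge0 xy; apply/vsubr_ge0; rewrite -vmulrBr; apply: vmul_ge0. Qed.

Lemma vmul_meet_eq0 p q : p ⊓ q = 0 -> 0 ⊑ p -> 0 ⊑ q -> p ⋅ q = 0.
Proof.
move=> pq0 p0 q0; have [pq_q0 _] := vmul_meet_spec pq0 q0.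
rewrite vmeetC in pq_q0; have [_] := vmul_meet_spec pq_q0 p0.
by rewrite vmeetxx.
Qed.

(* [addmul s z] is (1 + s) z, written without a unit. *)
Definition addmul s z := z + s ⋅ z.

Lemma addmulD s z t : addmul s (z + t) = addmul s z + addmul s t.
Proof. by rewrite /addmul vmulDr addrACA. Qed.

Lemma addmulB s z t : addmul s (z - t) = addmul s z - addmul s t.
Proof. by rewrite /addmul vmulrBr opprD addrACA. Qed.

Lemma addmulZ s (r : R) z : addmul s (r *: z) = r *: addmul s z.
Proof. by rewrite /addmul vmulrZ scalerDr. Qed.

Lemma addmul_ge0 s z : 0 ⊑ s -> 0 ⊑ z -> 0 ⊑ addmul s z.
Proof. by move=> s0 z0; apply: vaddr_ge0 => //; apply: vmul_ge0. Qed.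

Lemma vle_addmul s x y : 0 ⊑ s -> x ⊑ y -> addmul s x ⊑ addmul s y.
Proof. by move=> s0 /vsubr_ge0 xy; apply/vsubr_ge0; rewrite -addmulB; apply: addmul_ge0. Qed.

Lemma le_addmul_meet s e p : 0 ⊑ s -> 0 ⊑ e -> 0 ⊑ p ->
  p ⊑ addmul s e -> p ⊑ addmul s (e ⊓ p).
Proof.
move=> s0 e0 p0 p_le; set q := e ⊓ p.
have q0 : 0 ⊑ q by apply: vlexI.
have p_excess : p - q = pospart (p - e) by rewrite /q vmeetC subr_meet.
have e_excess : e - q = negpart (p - e) by rewrite /negpart opprB subr_meet.
set a := p - q in p_excess; set b := e - q in e_excess.
have sb_a0 : (s ⋅ b) ⊓ a = 0.
  apply: (proj2 (vmul_meet_spec _ s0)).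
  by rewrite p_excess e_excess vmeetC meet_pospart_negpart.
have a_le : a ⊑ s ⋅ e.
  rewrite p_excess; apply: vleUx; last exact: vmul_ge0.
  by apply/vlerBlDr; rewrite addrC.
have sb_le : s ⋅ b ⊑ s ⋅ e by apply: vler_wpM2l => //; apply: vgerBl.
have -> : p = q + a by rewrite addrC subrK.
have -> : q = e - b by rewrite opprB addrC subrK.
rewrite /addmul vmulrBr; apply/vleD2l/vlerBrDr.
by rewrite addrC vmeet_eq0_add //; apply: vleUx.
Qed.

Hypothesis vsemiprime : semiprime mul.

(* Testing 0 ≤ c - (y + c y) against y w, where w = (y² - y)⁺, gives w² ≤ 0. *)
Lemma addmul_le_bounded c y : 0 ⊑ c -> 0 ⊑ y -> addmul c y ⊑ c -> y ⋅ y ⊑ y.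
Proof.
move=> c0 y0 yc_le; set u := y ⋅ y - y; set w := pospart u; set v := y ⋅ w.
have w0 : 0 ⊑ w := pospart_ge0 u.
have v0 : 0 ⊑ v by apply: vmul_ge0.
have uw : u ⋅ w = w ⋅ w.
  have wu0 : negpart u ⋅ w = 0.
    apply: vmul_meet_eq0 (negpart_ge0 u) w0.
    by rewrite vmeetC meet_pospart_negpart.
  by rewrite -{1}(pospartBnegpart u) vmulrBl wu0 subr0.
have yv : y ⋅ v = v + w ⋅ w by rewrite vmulA -uw -vmulDl addrC subrK.
have : addmul c y ⋅ v ⊑ c ⋅ v.
  by apply/vsubr_ge0; rewrite -vmulrBl; apply: vmul_ge0 => //; apply/vsubr_ge0.
rewrite /addmul vmulDl -vmulA yv vmulDr addrCA -[X in _ ⊑ X]addr0 => /vleD2l.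
have cww0 : 0 ⊑ c ⋅ (w ⋅ w) by apply: vmul_ge0 => //; apply: vmul_ge0.
have := vleD (vleD v0 (vle_refl (w ⋅ w))) cww0; rewrite add0r addr0.
move=> /vle_trans le_ww /le_ww ww_le0.
have w_eq0 : w = 0.
  by apply: vsemiprime; exists 1%N; apply: vle_anti => //; apply: vmul_ge0.
by apply/vsubr_le0; rewrite -w_eq0; apply: le_pospart.
Qed.

(** * Solving y + s y = x by bisection *)

Hypothesis vcomplete : ru_complete le join.

Section Bisection.
Variables (s x : A).
Hypotheses (s0 : 0 ⊑ s) (x0 : 0 ⊑ x).

Definition bracket (p : A * A) : Prop :=
  p.1 ⊑ p.2 /\ addmul s p.1 ⊑ x /\ x ⊑ addmul s p.2.

(* Moving the midpoint by e ⊓ f⁺ or e ⊓ f⁻ rather than by e keeps the bracket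
   by [le_addmul_meet]; the two moves are disjoint, so the width halves. *)
Definition bisect (p : A * A) : A * A :=
  let e := 2^-1 *: (p.2 - p.1) in
  let m := p.1 + e in
  let f := x - addmul s m in
  (m - (e ⊓ negpart f), m + (e ⊓ pospart f)).

Lemma bisect_spec l h : bracket (l, h) ->
  [/\ bracket (bisect (l, h)), l ⊑ (bisect (l, h)).1, (bisect (l, h)).2 ⊑ h
    & (bisect (l, h)).2 - (bisect (l, h)).1 ⊑ 2^-1 *: (h - l)].
Proof.
move=> [/= lh [Tl_le xT_le]]; rewrite /bisect /=.
set e := 2^-1 *: (h - l); set m := l + e; set f := x - addmul s m.
set t1 := e ⊓ pospart f; set t2 := e ⊓ negpart f.
have e0 : 0 ⊑ e by apply: vscale_ge0; [rewrite invr_ge0 ler0n | apply/vsubr_ge0].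
have hE : h = m + e.
  have halves : (2^-1 + 2^-1 : R) = 1 by rewrite [RHS](splitr 1) mul1r.
  by rewrite -addrA -scalerDl halves scale1r addrC subrK.
have t10 : 0 ⊑ t1 by apply: vlexI => //; apply: pospart_ge0.
have t20 : 0 ⊑ t2 by apply: vlexI => //; apply: negpart_ge0.
have f_le : f ⊑ addmul s e.
  by apply/vlerBlDr; rewrite addrC -addmulD -hE.
have Nf_le : - f ⊑ addmul s e.
  by rewrite opprB; apply/vlerBlDr; rewrite /m addmulD addrC; apply/vleD2l.
have pf_le : pospart f ⊑ addmul s t1.
  apply: le_addmul_meet (pospart_ge0 f) _ => //.
  by apply: vleUx => //; apply: addmul_ge0.
have nf_le : negpart f ⊑ addmul s t2.
  apply: le_addmul_meet (negpart_ge0 f) _ => //.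
  by apply: vleUx => //; apply: addmul_ge0.
split.
- split=> /=; first exact: vle_trans (vgerBl _ t20) (vlerDl _ t10).
  split.
    rewrite addmulB; apply: (@vle_trans _ (addmul s m - negpart f)).
      by apply/vleD2l/vleN2.
    by apply/vlerBlDr; rewrite addrC; apply/vlerBlDr; rewrite -opprB; exact: oppr_le_negpart.
  rewrite addmulD; apply: (@vle_trans _ (addmul s m + pospart f)); last exact/vleD2l.
  by rewrite addrC; apply/vlerBlDr; exact: le_pospart.
- by rewrite -[l](addrK e); apply/vleD2l/vleN2; exact: vleIl.
- by rewrite hE; apply/vleD2l; exact: vleIl.
- have t12 : t1 ⊓ t2 = 0.
    exact: vmeet_eq0_le t10 (vleIr e _) t20 (vleIr e _) (meet_pospart_negpart f).
  rewrite opprB addrC addrA subrK addrC vmeet_eq0_add //.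
  by apply: vleUx; exact: vleIl.
Qed.

Definition bisection n := iter n bisect (0, x).

Lemma bisection_spec n : bracket (bisection n) /\
  (bisection n).2 - (bisection n).1 ⊑ 2^-1 ^+ n *: x.
Proof.
elim: n => [|n [bn_bracket bn_width]].
  rewrite /bisection /bracket /addmul /= vmulr0 addr0 subr0 expr0 scale1r.
  by split=> //; split=> //; split=> //; apply: vlerDl; apply: vmul_ge0.
rewrite /bisection iterS -/(bisection n); case: (bisection n) bn_bracket bn_width.
move=> l h lh_bracket lh_width; have [? _ _ width] := bisect_spec lh_bracket.
split=> //; apply: vle_trans width _.
by rewrite exprS -scalerA; apply: vler_wpZ2l; rewrite ?invr_ge0 ?ler0n.
Qed.

Lemma bisection_mono m n : (m <= n)%N ->
  (bisection m).1 ⊑ (bisection n).1 /\ (bisection n).2 ⊑ (bisection m).2.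
Proof.
elim: n => [|n IH]; first by rewrite leqn0 => /eqP ->.
rewrite leq_eqVlt => /predU1P [-> //| /IH [lo_le hi_le]].
have := (bisection_spec n).1; rewrite /bisection iterS -/(bisection n).
case: (bisection n) lo_le hi_le => l h lo_le hi_le /bisect_spec [_ l_le h_le _].
by split; [exact: vle_trans lo_le l_le | exact: vle_trans h_le hi_le].
Qed.

Lemma bisection_cauchy : ru_cauchy le join (fun n => (bisection n).1).
Proof.
exists x; split=> // eps /exists_halfpow_le [N halfN_le]; exists N.
have lo_diff n m : (N <= n)%N -> (N <= m)%N ->
    (bisection n).1 - (bisection m).1 ⊑ eps *: x.
  move=> /bisection_mono [_ hi_n] /bisection_mono [lo_m _].
  apply: vle_trans _ (vle_trans (bisection_spec N).2 (vler_wpZ2r halfN_le x0)).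
  apply: vleD _ ((vleN2 _ _).2 lo_m).
  exact: vle_trans (bisection_spec n).1.1 hi_n.
by move=> n m Nn Nm; apply: vleUx; rewrite ?opprB; apply: lo_diff.
Qed.

Lemma exists_addmul_eq : exists y, [/\ 0 ⊑ y, y ⊑ x & addmul s y = x].
Proof.
have [y y_lim] := vcomplete bisection_cauchy.
have lo_le n : (bisection n).1 ⊑ y.
  by apply: (ru_converges_ge (N := n) y_lim) => k /bisection_mono [].
have le_hi n : y ⊑ (bisection n).2.
  apply: (ru_converges_le (N := n) y_lim) => k /bisection_mono [_].
  exact: vle_trans (bisection_spec k).1.1.
have gap n : addmul s (bisection n).2 - addmul s (bisection n).1
    ⊑ 2^-1 ^+ n *: addmul s x.
  by rewrite -addmulB -addmulZ; apply: vle_addmul; last exact: (bisection_spec n).2.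
have Tx0 : 0 ⊑ addmul s x by apply: addmul_ge0.
exists y; split; [exact: lo_le 0%N | exact: le_hi 0%N |].
apply: vle_anti; apply/vsubr_le0; apply: (vle0_of_le_halfpow Tx0) => n;
  apply: vle_trans (gap n); apply: vleD.
- exact: vle_addmul.
- by apply/vleN2; have [_ []] := (bisection_spec n).1.
- by have [_ [_]] := (bisection_spec n).1.
- by apply/vleN2; apply: vle_addmul.
Qed.

End Bisection.

Section IntermediateAlgebra.
Variable B : A -> Prop.
Hypothesis B_intermediate : intermediate_algebra mul le join B.

Lemma intermediate_le_pospart b g : B b -> 0 ⊑ g -> g ⊑ pospart b -> B g.
Proof.
case: B_intermediate => [[_ [BD [_ BM]]] B_bounded] Bb g0 g_le.
set c := pospart b + negpart b.
have c0 : 0 ⊑ c by apply: vaddr_ge0; [exact: pospart_ge0 | exact: negpart_ge0].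
have [y [y0 y_le_g Ty]] := exists_addmul_eq c0 g0.
have negb_y : negpart b ⋅ y = 0.
  apply: vle_anti; last by apply: vmul_ge0 => //; exact: negpart_ge0.
  have <- : negpart b ⋅ pospart b = 0.
    apply: vmul_meet_eq0; [|exact: negpart_ge0 | exact: pospart_ge0].
    by rewrite vmeetC; exact: meet_pospart_negpart.
  by apply: vler_wpM2l; [exact: negpart_ge0 | exact: vle_trans y_le_g g_le].
have cy : c ⋅ y = b ⋅ y.
  by rewrite /c vmulDl negb_y addr0 -[in RHS](pospartBnegpart b) vmulrBl negb_y subr0.
have By : B y.
  apply: B_bounded; exists 1; split=> //; rewrite scale1r absv_id //.
  apply: (addmul_le_bounded c0 y0); rewrite Ty.
  by apply: vle_trans g_le _; apply: vlerDl; exact: negpart_ge0.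
by rewrite -Ty /addmul cy; apply: BD => //; apply: BM.
Qed.

Lemma intermediate_le_absv b g : B b -> 0 ⊑ g -> g ⊑ absv join b -> B g.
Proof.
case: B_intermediate => [[_ [BD [BZ _]]] _] Bb g0 g_le.
have BNb : B (- b) by rewrite -scaleN1r; apply: BZ.
rewrite -(subrK (g ⊓ pospart b) g); apply: BD.
  apply: (intermediate_le_pospart BNb); first by apply/vsubr_ge0; exact: vleIl.
  apply: meet_le_subr; first exact: negpart_ge0.
  exact: vle_trans g_le (absv_le_pospartDnegpart b).
apply: (intermediate_le_pospart Bb); last exact: vleIr.
by apply: vlexI => //; exact: pospart_ge0.
Qed.

Lemma intermediate_algebra_order_ideal : order_ideal le join B.
Proof.
have [[B0 [BD [BZ _]]] _] := B_intermediate.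
split=> //; split=> //; split=> // a b Bb ab.
rewrite -(pospartBnegpart a) -scaleN1r; apply: BD; last apply: BZ.
  exact: intermediate_le_absv Bb (pospart_ge0 a) (vle_trans (pospart_le_absv a) ab).
exact: intermediate_le_absv Bb (negpart_ge0 a) (vle_trans (negpart_le_absv a) ab).
Qed.

End IntermediateAlgebra.

End FAlgebraTheory.

Theorem corollary9 (R : realType) (A : lmodType R)
  (mul : A -> A -> A) (le : A -> A -> Prop) (meet join : A -> A -> A) :
  is_f_algebra mul le meet join ->
  archimedean_vl le ->
  semiprime mul ->
  ru_complete le join ->
  forall B : A -> Prop,
    intermediate_algebra mul le join B -> order_ideal le join B.
Proof.
move=> [[mulA [mulDl [mulDr [_ mulrZ]]]] [lattice [mul_ge0 mul_meet]]].
move=> arch semiprimeA completeA B.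
have [refl [anti [trans [addr [scale [meetS joinS]]]]]] := lattice.
exact: (intermediate_algebra_order_ideal refl anti trans addr scale meetS joinS
  arch mulA mulDl mulDr mulrZ mul_ge0 mul_meet semiprimeA completeA).
Qed.
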